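(* Let $(B,\bot,\top,\wedge,\vee)$ be a representable quantum bounded distributive lattice, and let $\neg,\widetilde{\neg}:B\to B$ be two linear maps, each of which is a quantum negation for it. Then $\neg=\widetilde{\neg}$.
   Context: $\Bbbk$ is a field of characteristic zero; coalgebras are counital coassociative with Sweedler notation $\Delta(b)=b_{(1)}\otimes b_{(2)}$. A representable quantum bounded distributive lattice is a coalgebra $B$ with group-like elements $\bot,\top\in B$ ($\Delta(\top)=\top\otimes\top$, $\varepsilon(\top)=1$, same for $\bot$) and coalgebra maps $\wedge,\vee:B\otimes B\to B$ (for the tensor product coalgebra structure $\Delta(b\otimes b')=b_{(1)}\otimes b'_{(1)}\otimes b_{(2)}\otimes b'_{(2)}$), written $b\wedge b':=\wedge(b\otimes b')$, $b\vee b':=\vee(b\otimes b')$, such that for all $b,b',b''\in B$: (associativity) $(b\wedge b')\wedge b''=b\wedge(b'\wedge b'')$, $(b\vee b')\vee b''=b\vee(b'\vee b'')$; (identity) $b\wedge\top=b$, $b\vee\bot=b$; (commutativity) $b\wedge b'=b'\wedge b$, $b\vee b'=b'\vee b$; (absorption) $b_{(1)}\wedge(b_{(2)}\vee b')=\varepsilon(b')b$, $b_{(1)}\vee(b_{(2)}\wedge b')=\varepsilon(b')b$; (distributivity) $b\vee(b'\wedge b'')=(b_{(1)}\vee b')\wedge(b_{(2)}\vee b'')$, $b\wedge(b'\vee b'')=(b_{(1)}\wedge b')\vee(b_{(2)}\wedge b'')$. A quantum negation is a linear map $\neg:B\to B$ with $\neg\circ\neg=\mathrm{id}_B$ which is a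 coalgebra map $B\to B^{o}$ into the co-opposite coalgebra, i.e. $\Delta(\neg b)=\neg(b_{(2)})\otimes\neg(b_{(1)})$ and $\varepsilon(\neg b)=\varepsilon(b)$, and which satisfies the complement axioms $\neg(b_{(1)})\vee b_{(2)}=b_{(1)}\vee\neg(b_{(2)})=\varepsilon(b)\top$ and $\neg(b_{(1)})\wedge b_{(2)}=b_{(1)}\wedge\neg(b_{(2)})=\varepsilon(b)\bot$ for all $b\in B$. A representable quantum Boolean algebra is a representable quantum bounded distributive lattice admitting a quantum negation. *)

From HB Require Import structures.
From mathcomp Require Import all_boot all_algebra.
Set Implicit Arguments. Unset Strict Implicit. Unset Printing Implicit Defensive.
Import GRing.Theory.
Local Open Scope ring_scope.

(* An element of B (x) B is represented by a finite Sweedler list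
   [:: (x_1,y_1); ...] standing for sum_i x_i (x) y_i.  Two such lists are
   equal as tensors iff they agree under every bilinear map into every
   K-vector space (universal property of the tensor product); likewise for
   B (x) B (x) B with trilinear maps. *)

Section QBA.
Variables (K : fieldType) (B : lmodType K).

Definition lin (V W : lmodType K) (f : V -> W) : Prop :=
  forall (a : K) (u v : V), f (a *: u + v) = a *: f u + f v.

Definition bilin (V : lmodType K) (f : B -> B -> V) : Prop :=
  (forall y, lin (fun x => f x y)) /\ (forall x, lin (f x)).

Definition trilin (V : lmodType K) (f : B -> B -> B -> V) : Prop :=
  [/\ (forall y z, lin (fun x => f x y z)),
      (forall x z, lin (fun y => f x y z)) &
      (forall x y, lin (f x y))].

Definition teq2 (s t : seq (B * B)) : Prop :=
  forall (V : lmodType K) (f : B -> B -> V), bilin f ->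
    \sum_(p <- s) f p.1 p.2 = \sum_(p <- t) f p.1 p.2.

Definition teq3 (s t : seq (B * B * B)) : Prop :=
  forall (V : lmodType K) (f : B -> B -> B -> V), trilin f ->
    \sum_(p <- s) f p.1.1 p.1.2 p.2 = \sum_(p <- t) f p.1.1 p.1.2 p.2.

Definition is_coalgebra (Delta : B -> seq (B * B)) (eps : B -> K) : Prop :=
  [/\
      (forall a u v, teq2 (Delta (a *: u + v))
                          ([seq (a *: p.1, p.2) | p <- Delta u] ++ Delta v)),
      (forall a u v, eps (a *: u + v) = a * eps u + eps v),
      (forall b, teq3 [seq (q.1, q.2, p.2) | p <- Delta b, q <- Delta p.1]
                      [seq (p.1, q.1, q.2) | p <- Delta b, q <- Delta p.2]) &
      (forall b, \sum_(p <- Delta b) eps p.1 *: p.2 = b /\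
                 \sum_(p <- Delta b) eps p.2 *: p.1 = b)].

Definition grouplike (Delta : B -> seq (B * B)) (eps : B -> K) (g : B) : Prop :=
  teq2 (Delta g) [:: (g, g)] /\ eps g = 1.

Definition coalg_map2 (Delta : B -> seq (B * B)) (eps : B -> K)
    (op : B -> B -> B) : Prop :=
  bilin op /\
  (forall b b', teq2 (Delta (op b b'))
                  [seq (op x.1 y.1, op x.2 y.2) | x <- Delta b, y <- Delta b']
                /\ eps (op b b') = eps b * eps b').

Definition is_rqbdl (Delta : B -> seq (B * B)) (eps : B -> K)
    (bot top : B) (meet join : B -> B -> B) : Prop :=
  [/\ is_coalgebra Delta eps,
      grouplike Delta eps bot /\ grouplike Delta eps top,
      coalg_map2 Delta eps meet, coalg_map2 Delta eps join &
  [/\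
      (forall b b' b'', meet (meet b b') b'' = meet b (meet b' b'') /\
                        join (join b b') b'' = join b (join b' b'')),
      (forall b, meet b top = b /\ join b bot = b),
      (forall b b', meet b b' = meet b' b /\ join b b' = join b' b),
      (forall b b', \sum_(p <- Delta b) meet p.1 (join p.2 b') = eps b' *: b /\
                    \sum_(p <- Delta b) join p.1 (meet p.2 b') = eps b' *: b) &
      (forall b b' b'',
         join b (meet b' b'') =
           \sum_(p <- Delta b) meet (join p.1 b') (join p.2 b'') /\
         meet b (join b' b'') =
           \sum_(p <- Delta b) join (meet p.1 b') (meet p.2 b''))]].

Definition is_qnegation (Delta : B -> seq (B * B)) (eps : B -> K)
    (bot top : B) (meet join : B -> B -> B) (neg : B -> B) : Prop :=
  [/\ lin neg,
      (forall b, neg (neg b) = b),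
      (* coalgebra map into the co-opposite coalgebra *)
      (forall b, teq2 (Delta (neg b)) [seq (neg p.2, neg p.1) | p <- Delta b]),
      (forall b, eps (neg b) = eps b) &
      (forall b,
        [/\ \sum_(p <- Delta b) join (neg p.1) p.2 = eps b *: top,
            \sum_(p <- Delta b) join p.1 (neg p.2) = eps b *: top,
            \sum_(p <- Delta b) meet (neg p.1) p.2 = eps b *: bot &
            \sum_(p <- Delta b) meet p.1 (neg p.2) = eps b *: bot])].

End QBA.

From HB Require Import structures.
From mathcomp Require Import all_boot all_algebra.
Import GRing.Theory.
Local Open Scope ring_scope.
Set Implicit Arguments. Unset Strict Implicit.

(* If N satisfies the meet-complement axiom and M the join-complement axiom,
   then N b = N b_(1) /\ M b_(2): write N b = N b_(1) /\ eps(b_(2)) top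
   = N b_(1) /\ (b_(2) \/ M b_(3)), distribute, and the summand containing
   N b_(1) /\ b_(2) collapses to bot.  Applying this to (neg, neg') in B and to
   (neg', neg) in the co-opposite coalgebra, where the hypotheses survive by
   commutativity of /\ and \/, and using commutativity once more gives
   neg b = neg' b. *)

Section Linearity.
Variables (K : fieldType) (V W : lmodType K).

Lemma lin0 (f : V -> W) : lin f -> f 0 = 0.
Proof.
move=> linf; have E := linf 1 0 0; rewrite !scale1r addr0 in E.
by apply/(addrI (f 0)); rewrite addr0 -E.
Qed.

Lemma linD (f : V -> W) : lin f -> forall u v, f (u + v) = f u + f v.
Proof. by move=> linf u v; have := linf 1 u v; rewrite !scale1r. Qed.

Lemma linZ (f : V -> W) : lin f -> forall a u, f (a *: u) = a *: f u.
Proof. by move=> linf a u; have := linf a u 0; rewrite !addr0 lin0 // addr0. Qed.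

Lemma lin_sum (f : V -> W) : lin f ->
  forall (I : Type) (s : seq I) (g : I -> V),
  f (\sum_(i <- s) g i) = \sum_(i <- s) f (g i).
Proof.
move=> linf I s g; elim: s => [|x s IH]; first by rewrite !big_nil lin0.
by rewrite !big_cons linD // IH.
Qed.

End Linearity.

Section Coalgebra.
Variables (K : fieldType) (B : lmodType K).
Implicit Types (D : B -> seq (B * B)) (N : B -> B).

Definition coassociative D : Prop :=
  forall b, teq3 [seq (q.1, q.2, p.2) | p <- D b, q <- D p.1]
                 [seq (p.1, q.1, q.2) | p <- D b, q <- D p.2].

Definition anti_comultiplicative D N : Prop :=
  forall b, teq2 (D (N b)) [seq (N p.2, N p.1) | p <- D b].

Definition coop D (b : B) : seq (B * B) := [seq (p.2, p.1) | p <- D b].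

Lemma coassoc_sum D : coassociative D ->
  forall b (V : lmodType K) (f : B -> B -> B -> V), trilin f ->
  \sum_(p <- D b) \sum_(q <- D p.1) f q.1 q.2 p.2 =
  \sum_(p <- D b) \sum_(q <- D p.2) f p.1 q.1 q.2.
Proof. by move=> coasD b V f trif; have := coasD b V f trif; rewrite !big_allpairs_dep. Qed.

Lemma coassociative_coop D : coassociative D -> coassociative (coop D).
Proof.
move=> coasD c V f [f1 f2 f3]; rewrite !big_allpairs_dep big_map [RHS]big_map.
under eq_bigr => p _ do rewrite big_map.
under [RHS]eq_bigr => p _ do rewrite big_map.
have trif_rev : trilin (fun x y z => f z y x).
  by split=> [y z|x z|x y] a u v /=; [exact: f3 | exact: f2 | exact: f1].
by symmetry; exact: (coassoc_sum coasD c trif_rev).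
Qed.

Lemma anti_comultiplicative_coop D N :
  anti_comultiplicative D N -> anti_comultiplicative (coop D) N.
Proof.
move=> antiN c V f [f1 f2]; rewrite !big_map /=.
have bif_rev : bilin (fun u v => f v u).
  by split=> [y|x] a u v /=; [exact: f2 | exact: f1].
by have := antiN c V _ bif_rev; rewrite big_map.
Qed.

End Coalgebra.

Section ComplementDecomposition.
Variables (K : fieldType) (B : lmodType K) (D : B -> seq (B * B)) (eps : B -> K).
Variables (bot top : B) (meet join : B -> B -> B).
Hypotheses (meet_bilin : bilin meet) (join_bilin : bilin join).
Hypothesis counit_r : forall b, \sum_(p <- D b) eps p.2 *: p.1 = b.
Hypothesis coasD : coassociative D.
Hypotheses (joinC : forall x y, join x y = join y x)
           (join_bot : forall x, join x bot = x)
           (meet_top : forall x, meet x top = x).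
Hypothesis meet_join_distr : forall a x y,
  meet a (join x y) = \sum_(p <- D a) join (meet p.1 x) (meet p.2 y).
Variables (N M : B -> B).
Hypotheses (linN : lin N) (linM : lin M) (antiN : anti_comultiplicative D N).
Hypothesis meet_compl : forall b, \sum_(p <- D b) meet (N p.1) p.2 = eps b *: bot.
Hypothesis join_compl : forall b, \sum_(p <- D b) join p.1 (M p.2) = eps b *: top.

Lemma meet_scalel a u y : meet (a *: u) y = a *: meet u y.
Proof. exact: (linZ (proj1 meet_bilin y) a u). Qed.

Lemma meet_scaler a u y : meet y (a *: u) = a *: meet y u.
Proof. exact: (linZ (proj2 meet_bilin y) a u). Qed.

Lemma meet_neg_absorb c y :
  \sum_(q <- D c) meet (N q.1) (join q.2 y) = meet (N c) y.
Proof.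
have [mL mR] := meet_bilin; have [jL jR] := join_bilin.
have distributed : \sum_(q <- D c) meet (N q.1) (join q.2 y) =
    \sum_(q <- D c) \sum_(s <- D q.1) join (meet (N s.2) q.2) (meet (N s.1) y).
  apply: eq_bigr => q _; rewrite meet_join_distr.
  have bi : bilin (fun u v => join (meet u q.2) (meet v y)).
    by split=> w a u v /=; [rewrite (mL q.2 a u v) (jL _ a) | rewrite (mL y a u v) (jR _ a)].
  by have := antiN q.1 bi; rewrite big_map.
have tri : trilin (fun x y' z => join (meet (N y') z) (meet (N x) y)).
  split=> [y' z|x z|x y'] a u v /=.
  - by rewrite (linN a u v) (mL y) (jR _ a).
  - by rewrite (linN a u v) (mL z) (jL _ a).
  - by rewrite (mR (N y') a u v) (jL _ a).
have counit_expand : meet (N c) y = \sum_(q <- D c) eps q.2 *: meet (N q.1) y.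
  rewrite -{1}(counit_r c) (lin_sum linN) (lin_sum (mL y)).
  by apply: eq_bigr => q _; rewrite (linZ linN) meet_scalel.
rewrite distributed (coassoc_sum coasD c tri) counit_expand /=.
apply: eq_bigr => q _.
rewrite -(lin_sum (jL _) (D q.2) (fun s => meet (N s.1) s.2)) meet_compl.
by rewrite (linZ (jL _)) joinC join_bot.
Qed.

Lemma neg_meet_decomp b : N b = \sum_(p <- D b) meet (N p.1) (M p.2).
Proof.
have [mL mR] := meet_bilin; have [jL jR] := join_bilin.
have tri : trilin (fun x y z => meet (N x) (join y (M z))).
  split=> [y z|x z|x y] a u v /=.
  - by rewrite (linN a u v) (mL _ a).
  - by rewrite (jL _ a) (mR _ a).
  - by rewrite (linM a u v) (jR _ a) (mR _ a).
have top_expand :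
    N b = \sum_(p <- D b) \sum_(q <- D p.2) meet (N p.1) (join q.1 (M q.2)).
  rewrite -{1}(counit_r b) (lin_sum linN); apply: eq_bigr => p _.
  rewrite (linZ linN) -{1}[N p.1]meet_top -meet_scaler -join_compl.
  exact: (lin_sum (mR _) (D p.2) (fun q => join q.1 (M q.2))).
rewrite top_expand -(coassoc_sum coasD b tri).
by apply: eq_bigr => p _; rewrite meet_neg_absorb.
Qed.

End ComplementDecomposition.

Theorem mainTheorem8 (K : fieldType) (charK0 : [pchar K] =i pred0)
    (B : lmodType K) (Delta : B -> seq (B * B)) (eps : B -> K)
    (bot top : B) (meet join : B -> B -> B)
    (HB : is_rqbdl Delta eps bot top meet join)
    (neg neg' : B -> B)
    (Hneg : is_qnegation Delta eps bot top meet join neg)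
    (Hneg' : is_qnegation Delta eps bot top meet join neg') :
  forall b : B, neg b = neg' b.
Proof.
move: HB => [[_ _ coas counit] _ [meet_bilin _] [join_bilin _] [_ ident comm _ distr]].
move: Hneg => [linN _ antiN _ complN]; move: Hneg' => [linN' _ antiN' _ complN'].
have meetC x y := proj1 (comm x y); have joinC x y := proj2 (comm x y).
have meet_top x := proj1 (ident x); have join_bot x := proj2 (ident x).
have meet_join_distr a x y := proj2 (distr a x y).
have counit_r c := proj2 (counit c).
have meet_complN c : \sum_(p <- Delta c) meet (neg p.1) p.2 = eps c *: bot.
  by have [] := complN c.
have join_complN' c : \sum_(p <- Delta c) join p.1 (neg' p.2) = eps c *: top.
  by have [] := complN' c.
have counit_coop c : \sum_(p <- coop Delta c) eps p.2 *: p.1 = c.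
  by rewrite big_map; exact: proj1 (counit c).
have distr_coop a x y : meet a (join x y) =
    \sum_(p <- coop Delta a) join (meet p.1 x) (meet p.2 y).
  rewrite joinC meet_join_distr big_map.
  by apply: eq_bigr => p _; exact: joinC.
have meet_compl_coop c : \sum_(p <- coop Delta c) meet (neg' p.1) p.2 = eps c *: bot.
  have [_ _ _ <-] := complN' c; rewrite big_map.
  by apply: eq_bigr => p _; exact: meetC.
have join_compl_coop c : \sum_(p <- coop Delta c) join p.1 (neg p.2) = eps c *: top.
  have [<- _ _ _] := complN c; rewrite big_map.
  by apply: eq_bigr => p _; exact: joinC.
move=> b.
rewrite (neg_meet_decomp meet_bilin join_bilin counit_r coas joinC join_bot meet_top
  meet_join_distr linN linN' antiN meet_complN join_complN' b).
rewrite (neg_meet_decomp meet_bilin join_bilin counit_coop (coassociative_coop coas)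
  joinC join_bot meet_top distr_coop linN' linN (anti_comultiplicative_coop antiN')
  meet_compl_coop join_compl_coop b).
by rewrite big_map; apply: eq_bigr => p _; exact: meetC.
Qed.
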